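(* Let $F_N:\mathbb{R}^n\to\mathbb{R}$ be the function computed by a feedforward ReLU network (as described in the context), let $P=\{\mathbf{x}\in\mathbb{R}^n : A\mathbf{x}\le \mathbf{c}\}$ be a nonempty compact polyhedron, and let $\delta>0$. Suppose the procedures LocalSearch and GlobalSearch satisfy properties (P1) and (P2) described in the context. Then the algorithm FindUpperBound$(F_N,P,\delta)$ described in the context always terminates, and the value $u$ it returns satisfies $$u^*\le u\le u^*+\delta,\qquad\text{where } u^*=\max_{\mathbf{x}\in P}F_N(\mathbf{x}).$$
   Context: Network: integers $n,k,N\ge 1$; matrices $W_0\in\mathbb{R}^{N\times n}$, $W_i\in\mathbb{R}^{N\times N}$ for $1\le i\le k-1$, $W_k\in\mathbb{R}^{1\times N}$ and vectors $\mathbf{b}_0,\dots,\mathbf{b}_{k-1}\in\mathbb{R}^N$, $b_k\in\mathbb{R}$. Let $\sigma(z)=\max(z,0)$, applied componentwise to vectors. For input $\mathbf{x}\in\mathbb{R}^n$ set $\mathbf{z}_0=\mathbf{x}$, $\mathbf{z}_{i+1}=\sigma(W_i\mathbf{z}_i+\mathbf{b}_i)$ for $i=0,\dots,k-1$, and $F_N(\mathbf{x})=W_k\mathbf{z}_k+b_k$. Property (P1): given $\mathbf{x}\in P$, LocalSearch$(\mathbf{x})$ returns a pair $(\mathbf{x}',u')$ with $\mathbf{x}'\in P$, $u'=F_N(\mathbf{x}')$ and $F_N(\mathbf{x}')\ge F_N(\mathbf{x})$. Property (P2): given a real number $u$, GlobalSearch$(u)$ either declares ''feasible'' and returns $(\mathbf{x}',u')$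 with $\mathbf{x}'\in P$, $u'=F_N(\mathbf{x}')\ge u$, or declares ''not feasible'', which it does only if no $\mathbf{x}'\in P$ satisfies $F_N(\mathbf{x}')\ge u$. Algorithm FindUpperBound$(F_N,P,\delta)$: pick any $\mathbf{x}\in P$. Repeat: (1) $(\mathbf{x},u)\leftarrow$ LocalSearch$(\mathbf{x})$; (2) $u\leftarrow u+\delta$; (3) call GlobalSearch$(u)$; if it is feasible with output $(\mathbf{x}',u')$, set $(\mathbf{x},u)\leftarrow(\mathbf{x}',u')$ and repeat; otherwise stop and return $(\mathbf{x},u)$. *)

From HB Require Import structures.
From mathcomp Require Import all_boot all_order all_algebra.
From mathcomp Require Import all_classical all_reals all_analysis.
Set Implicit Arguments. Unset Strict Implicit. Unset Printing Implicit Defensive.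
Import Order.TTheory GRing.Theory Num.Theory.
Local Open Scope ring_scope.

Definition relu (R : realType) (N : nat) (z : 'cV[R]_N) : 'cV[R]_N :=
  \col_i Num.max (z i 0) 0.

Fixpoint hidden_layers (R : realType) (N : nat)
  (W : nat -> 'M[R]_N) (b : nat -> 'cV[R]_N) (i cnt : nat) (z : 'cV[R]_N)
  : 'cV[R]_N :=
  match cnt with
  | 0 => z
  | c.+1 => hidden_layers W b i.+1 c (relu (W i *m z + b i))
  end.

(* F_N(x) = W_k z_k + b_k, with z_1 = relu(W_0 x + b_0),
   z_{i+1} = relu(W_i z_i + b_i) for i = 1..k-1. *)
Definition relu_net (R : realType) (n N k : nat)
  (W0 : 'M[R]_(N, n)) (W : nat -> 'M[R]_N) (Wk : 'rV[R]_N)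
  (b : nat -> 'cV[R]_N) (bk : R) (x : 'cV[R]_n) : R :=
  (Wk *m hidden_layers W b 1 (k.-1) (relu (W0 *m x + b 0%N))) 0 0 + bk.

Definition polyhedron (R : realType) (m n : nat) (A : 'M[R]_(m, n))
  (c : 'cV[R]_m) : set 'cV[R]_n :=
  [set x | forall i : 'I_m, (A *m x) i 0 <= c i 0].

Definition local_search_spec (R : realType) (n : nat) (P : set 'cV[R]_n)
  (F : 'cV[R]_n -> R) (LS : 'cV[R]_n -> 'cV[R]_n * R) : Prop :=
  forall x, P x -> P (LS x).1 /\ (LS x).2 = F (LS x).1 /\ F x <= F (LS x).1.

(* (P2): Some (x', u') = "feasible", None = "not feasible" *)
Definition global_search_spec (R : realType) (n : nat) (P : set 'cV[R]_n)
  (F : 'cV[R]_n -> R) (GS : R -> option ('cV[R]_n * R)) : Prop :=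
  forall u,
    match GS u with
    | Some (x', u') => P x' /\ u' = F x' /\ u <= u'
    | None => ~ (exists x', P x' /\ u <= F x')
    end.

(* FindUpperBound run with a budget of [fuel] loop iterations, starting from
   the current point x.  Returns Some (x, u) if the algorithm stops within
   the budget, None if the budget is exhausted. *)
Fixpoint find_upper_bound (R : realType) (n : nat)
  (LS : 'cV[R]_n -> 'cV[R]_n * R) (GS : R -> option ('cV[R]_n * R))
  (delta : R) (fuel : nat) (x : 'cV[R]_n) : option ('cV[R]_n * R) :=
  match fuel with
  | 0 => None
  | f.+1 =>
      let xu := LS x in
      let u := xu.2 + delta in
      match GS u with
      | Some (x', u') => find_upper_bound LS GS delta f x'
      | None => Some (xu.1, u)
      end
  end.

Definition is_max_on (R : realType) (n : nat) (P : set 'cV[R]_n)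
  (F : 'cV[R]_n -> R) (m : R) : Prop :=
  (exists x, P x /\ F x = m) /\ (forall x, P x -> F x <= m).

From HB Require Import structures.
From mathcomp Require Import all_boot all_order all_algebra.
From mathcomp Require Import all_classical all_reals all_analysis.
From mathcomp Require Import lra.
Set Implicit Arguments. Unset Strict Implicit. Unset Printing Implicit Defensive.
Import Order.TTheory GRing.Theory Num.Theory.
Import numFieldTopology.Exports.
Local Open Scope ring_scope.

(* The network is continuous, so it attains a maximum u* on the compact set P.
   Every iteration that does not stop moves to a point where F_N has grown by
   at least delta, so the loop stops after at most (u* - F_N(x0)) / delta + 1
   iterations.  When it stops, GlobalSearch has certified that no point of P
   reaches u = F_N(x) + delta, whence u* < u <= u* + delta. *)

Section ReluNetContinuity.
Context {R : realType} {T : topologicalType}.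

Lemma continuous_mulmx_entry p q (M : 'M[R]_(p, q)) (g : T -> 'cV[R]_q) :
  (forall j, continuous (fun x => g x j 0)) ->
  forall i, continuous (fun x => (M *m g x) i 0).
Proof.
move=> g_cont i; under eq_fun do rewrite mxE.
apply: (continuous_big (@add_continuous R)) => j _ x.
by apply: continuousM; [exact: cst_continuous | exact: g_cont].
Qed.

Lemma continuous_affine_entry p q (M : 'M[R]_(p, q)) (v : 'cV[R]_p)
    (g : T -> 'cV[R]_q) :
  (forall j, continuous (fun x => g x j 0)) ->
  forall i, continuous (fun x => (M *m g x + v) i 0).
Proof.
move=> g_cont i x; under eq_fun do rewrite mxE.
by apply: continuousD; [exact: continuous_mulmx_entry | exact: cst_continuous].
Qed.

Lemma continuous_relu_entry p (g : T -> 'cV[R]_p) :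
  (forall j, continuous (fun x => g x j 0)) ->
  forall i, continuous (fun x => relu (g x) i 0).
Proof.
move=> g_cont i x; under eq_fun do rewrite mxE.
by apply: continuous_max; [exact: g_cont | exact: cst_continuous].
Qed.

Lemma continuous_hidden_layers_entry N (W : nat -> 'M[R]_N) (b : nat -> 'cV[R]_N)
    cnt i (g : T -> 'cV[R]_N) :
  (forall j, continuous (fun x => g x j 0)) ->
  forall j, continuous (fun x => hidden_layers W b i cnt (g x) j 0).
Proof.
elim: cnt i g => [//|cnt IH] i g g_cont /=.
by apply: IH => j; apply/continuous_relu_entry/continuous_affine_entry.
Qed.

End ReluNetContinuity.

Lemma continuous_relu_net (R : realType) n k N (W0 : 'M[R]_(N, n))
    (W : nat -> 'M[R]_N) (Wk : 'rV[R]_N) (b : nat -> 'cV[R]_N) (bk : R) :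
  continuous (relu_net k W0 W Wk b bk).
Proof.
move=> x; apply: continuousD; last exact: cst_continuous.
apply: continuous_mulmx_entry; apply: continuous_hidden_layers_entry.
by apply/continuous_relu_entry/continuous_affine_entry => j; exact: coord_continuous.
Qed.

Lemma compact_is_max_on (R : realType) n (P : set 'cV[R]_n) (F : 'cV[R]_n -> R) :
  (exists x, P x) -> compact P -> continuous F -> exists u, is_max_on P F u.
Proof.
move=> P_nonempty P_compact F_cont.
have [xm xmP xm_max] := compact_EVT_max P_nonempty P_compact (continuous_subspaceT F_cont).
rewrite inE in xmP; exists (F xm); split; first by exists xm.
by move=> x Px; apply: xm_max; rewrite inE.
Qed.

Section FindUpperBound.
Context {R : realType} {n : nat} {P : set 'cV[R]_n} {F : 'cV[R]_n -> R}.
Context {LS : 'cV[R]_n -> 'cV[R]_n * R} {GS : R -> option ('cV[R]_n * R)}.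
Context {delta : R}.
Hypothesis LS_spec : local_search_spec P F LS.
Hypothesis GS_spec : global_search_spec P F GS.

Lemma find_upper_boundP fuel x x1 u : P x ->
  find_upper_bound LS GS delta fuel x = Some (x1, u) ->
  [/\ P x1, u = F x1 + delta & forall x', P x' -> F x' < u].
Proof.
elim: fuel x => [//|fuel IH] x Px /=.
have [PLx [LSx_val _]] := LS_spec Px.
have := GS_spec ((LS x).2 + delta); case: (GS _) => [[x' u'] [Px' _]|no_better].
  exact: IH.
case=> <- <-; split => [//||x' Px']; first by rewrite LSx_val.
by rewrite ltNge; apply/negP => le_u; apply: no_better; exists x'.
Qed.

Lemma find_upper_bound_Some_of_budget M :
  (forall x, P x -> F x <= M) ->
  forall fuel x, P x -> M < F x + fuel%:R * delta ->
  exists res, find_upper_bound LS GS delta fuel x = Some res.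
Proof.
move=> F_le_M; elim=> [|fuel IH] x Px budget /=.
  by move: budget; rewrite mul0r addr0 ltNge F_le_M.
have [_ [LSx_val F_le_LSx]] := LS_spec Px.
have := GS_spec ((LS x).2 + delta); case: (GS _) => [[x' u'] [Px' [-> le_u]]|]; last by eexists.
apply: IH => //; apply: (lt_le_trans budget).
have gain : F x + delta <= F x' by rewrite LSx_val in le_u; lra.
by rewrite -natr1 mulrDl mul1r; lra.
Qed.

Lemma find_upper_bound_terminates (M : R) x : 0 < delta ->
  (forall x, P x -> F x <= M) -> P x ->
  exists fuel res, find_upper_bound LS GS delta fuel x = Some res.
Proof.
move=> delta_gt0 F_le_M Px.
exists (Num.truncn ((M - F x) / delta)).+1.
apply: (find_upper_bound_Some_of_budget F_le_M Px).
by rewrite -ltrBlDl -ltr_pdivrMr //; apply: truncnS_gt.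
Qed.

Lemma find_upper_bound_max_bounds ustar fuel x x1 u :
  is_max_on P F ustar -> P x ->
  find_upper_bound LS GS delta fuel x = Some (x1, u) ->
  ustar <= u <= ustar + delta.
Proof.
move=> [[xm [Pxm <-]] F_le_max] Px /(find_upper_boundP Px) [Px1 -> F_lt].
by rewrite ltW ?F_lt ?lerD2r ?F_le_max.
Qed.

End FindUpperBound.

Theorem mainTheorem1 (R : realType) (n k N m : nat)
  (W0 : 'M[R]_(N, n)) (W : nat -> 'M[R]_N) (Wk : 'rV[R]_N)
  (b : nat -> 'cV[R]_N) (bk : R)
  (A : 'M[R]_(m, n)) (c : 'cV[R]_m) (delta : R)
  (LS : 'cV[R]_n -> 'cV[R]_n * R) (GS : R -> option ('cV[R]_n * R)) :
  (1 <= n)%N -> (1 <= k)%N -> (1 <= N)%N ->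
  (exists x, polyhedron A c x) ->
  compact (polyhedron A c) ->
  0 < delta ->
  local_search_spec (polyhedron A c) (relu_net k W0 W Wk b bk) LS ->
  global_search_spec (polyhedron A c) (relu_net k W0 W Wk b bk) GS ->
  forall x0, polyhedron A c x0 ->
    (exists fuel res, find_upper_bound LS GS delta fuel x0 = Some res) /\
    (forall fuel x u, find_upper_bound LS GS delta fuel x0 = Some (x, u) ->
       exists ustar, is_max_on (polyhedron A c) (relu_net k W0 W Wk b bk) ustar /\
         ustar <= u <= ustar + delta).
Proof.
move=> _ _ _ P_nonempty P_compact delta_gt0 LS_spec GS_spec x0 Px0.
have [ustar ustar_max] :
    exists ustar, is_max_on (polyhedron A c) (relu_net k W0 W Wk b bk) ustar.
  by apply: compact_is_max_on => //; exact: continuous_relu_net.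
split; first exact: (find_upper_bound_terminates LS_spec GS_spec delta_gt0 ustar_max.2 Px0).
move=> fuel x u run; exists ustar; split => //.
exact: (find_upper_bound_max_bounds LS_spec GS_spec ustar_max Px0 run).
Qed.
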